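(* Let $A$ be a non-zero $n\times m$ matrix with entries in $[0,1]$, with value $v$, and let $y^*$ be the minimax strategy of the column player used by LRCA. Suppose the row player follows a no-regret algorithm having the stability property with respect to $y^*$, and the column player plays the LRCA algorithm. Then for every $\varepsilon>0$ there exists $l\in\mathbb{N}$ such that $f(x_l)-v\le\varepsilon$.
   Context: Repeated two-player zero-sum game: at round $t$ the row player plays $x_t\in\Delta_n$ and the column player $y_t\in\Delta_m$; the row player minimizes, the column player maximizes $x_t^\top Ay_t$. $v$ is the value of the game and $f(x):=\max_{y\in\Delta_m}x^\top Ay$; a minimax strategy of the column player is $y$ with $\min_{x\in\Delta_n}x^\top Ay=v$. The row player's algorithm chooses $x_{t+1}$ from the history; it is no-regret if for every sequence of column strategies, $\lim_{T\to\infty}\big(\min_{i}\frac1T\sum_{t=1}^Te_i^\top Ay_t-\frac1T\sum_{t=1}^Tx_t^\top Ay_t\big)=0$. It has the stability property if, for every $t$, $y_t=y^*$ implies $x_{t+1}=x_t$. LRCA for the column player (who knows $A$): at odd rounds $y_t=y^*$; at even rounds $t$, $e_t\in\arg\max_{e\in\{e_1,\dots,e_m\}}x_{t-1}^\top Ae$, $\alpha_t=\frac{f(x_{t-1})-v}{\max(n/4,2)}$, $y_t=(1-\alpha_t)y^*+\alpha_te_t$. *)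

From HB Require Import structures.
From mathcomp Require Import all_boot all_order all_algebra.
Set Implicit Arguments. Unset Strict Implicit. Unset Printing Implicit Defensive.
Import Order.TTheory GRing.Theory Num.Theory.
Local Open Scope ring_scope.

Definition simplex (R : realFieldType) (k : nat) (x : 'rV[R]_k) : Prop :=
  (forall i, 0 <= x 0 i) /\ \sum_i x 0 i = 1.

Definition pure {R : realFieldType} {k : nat} (j : 'I_k) : 'rV[R]_k := delta_mx 0 j.

Definition payoff (R : realFieldType) (n m : nat) (A : 'M[R]_(n, m))
  (x : 'rV[R]_n) (y : 'rV[R]_m) : R := (x *m A *m y^T) 0 0.

(* f(x) = max_{y in Delta_m} x^T A y, written as the maximum over pure
   strategies (the maximum of a linear function on the simplex is attained at
   a vertex). *)
Definition fval (R : realFieldType) (n m : nat) (A : 'M[R]_(n, m.+1))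
  (x : 'rV[R]_n) : R :=
  \big[Num.max/payoff A x (pure ord0)]_(j < m.+1) payoff A x (pure j).

Definition is_value (R : realFieldType) (n m : nat) (A : 'M[R]_(n, m.+1)) (v : R) : Prop :=
  (exists2 x, simplex x & fval A x = v) /\ (forall x, simplex x -> v <= fval A x).

Definition col_minimax (R : realFieldType) (n m : nat) (A : 'M[R]_(n, m)) (v : R)
  (y : 'rV[R]_m) : Prop :=
  simplex y /\ (exists2 x, simplex x & payoff A x y = v) /\
  (forall x, simplex x -> v <= payoff A x y).

(* A deterministic row-player algorithm maps the history of column strategies
   [y_1; ...; y_t] to x_{t+1}; x_1 = alg [::]. *)
Definition row_alg (R : realFieldType) (n m : nat) := seq 'rV[R]_m -> 'rV[R]_n.

(* Rounds are indexed from 1; ys t is y_t. x_t = alg [y_1; ...; y_{t-1}]. *)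
Definition row_play (R : realFieldType) (n m : nat) (alg : row_alg R n m)
  (ys : nat -> 'rV[R]_m) (t : nat) : 'rV[R]_n :=
  alg [seq ys i | i <- iota 1 t.-1].

Definition alg_valid (R : realFieldType) (n m : nat) (alg : row_alg R n m) : Prop :=
  forall h : seq 'rV[R]_m, (forall y, y \in h -> simplex y) -> simplex (alg h).

Definition regret (R : realFieldType) (n m : nat) (A : 'M[R]_(n.+1, m))
  (alg : row_alg R n.+1 m) (ys : nat -> 'rV[R]_m) (T : nat) : R :=
  \big[Num.min/ T%:R^-1 * \sum_(1 <= t < T.+1) payoff A (pure ord0) (ys t)]_(i < n.+1)
      (T%:R^-1 * \sum_(1 <= t < T.+1) payoff A (pure i) (ys t))
  - T%:R^-1 * \sum_(1 <= t < T.+1) payoff A (row_play alg ys t) (ys t).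

Definition no_regret (R : realFieldType) (n m : nat) (A : 'M[R]_(n.+1, m))
  (alg : row_alg R n.+1 m) : Prop :=
  forall ys : nat -> 'rV[R]_m, (forall t, simplex (ys t)) ->
  forall eps : R, 0 < eps -> exists N : nat, forall T : nat, (N <= T)%N ->
    `| regret A alg ys T | <= eps.

Definition stable (R : realFieldType) (n m : nat) (alg : row_alg R n m)
  (ystar : 'rV[R]_m) : Prop :=
  forall ys : nat -> 'rV[R]_m, (forall t, simplex (ys t)) ->
  forall t : nat, (1 <= t)%N -> ys t = ystar ->
    row_play alg ys t.+1 = row_play alg ys t.

(* The column sequence ys is produced by LRCA against the row player's plays
   xs (any tie-breaking in the argmax is allowed). *)
Definition lrca (R : realFieldType) (n m : nat) (A : 'M[R]_(n.+1, m.+1)) (v : R)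
  (ystar : 'rV[R]_m.+1) (xs : nat -> 'rV[R]_n.+1) (ys : nat -> 'rV[R]_m.+1) : Prop :=
  forall t : nat, (1 <= t)%N ->
    (odd t -> ys t = ystar) /\
    (~~ odd t ->
      exists j : 'I_m.+1,
        (forall j' : 'I_m.+1, payoff A (xs t.-1) (pure j') <= payoff A (xs t.-1) (pure j)) /\
        let alpha := (fval A (xs t.-1) - v) / Num.max ((n.+1)%:R / 4) 2 in
        ys t = (1 - alpha) *: ystar + alpha *: pure j).

(** Suppose the gap [f(x_l) - v] stayed above [eps] for every [l].  At odd
    rounds LRCA plays the minimax [y*], so the row player earns at least [v];
    by stability it then keeps [x_t] unchanged, and at the following even
    round LRCA mixes a best response into [y*] with weight
    [alpha = (f(x_t) - v) / c], which earns at least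
    [v + (f(x_t) - v)^2 / c > v + eps^2 / c].  Hence the row player's
    average payoff exceeds [v + eps^2 / (2c)] in the long run, whereas a
    minimax row strategy [x*] earns at most [v] against every [y_t]; the
    regret is therefore eventually below [-eps^2 / (2c)], contradicting the
    no-regret property. *)
From HB Require Import structures.
From mathcomp Require Import all_boot all_order all_algebra.
From mathcomp Require Import ring lra zify.
Set Implicit Arguments. Unset Strict Implicit. Unset Printing Implicit Defensive.
Import Order.TTheory GRing.Theory Num.Theory.
Local Open Scope ring_scope.

Section Payoff.
Variables (R : realFieldType) (n m : nat).
Implicit Types (A : 'M[R]_(n, m)) (x : 'rV[R]_n) (y : 'rV[R]_m).

Lemma payoff_pure_r A x j : payoff A x (pure j) = (x *m A) 0 j.
Proof. by rewrite /payoff /pure trmx_delta -colE mxE. Qed.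

Lemma payoff_pure_l A i y : payoff A (pure i) y = (A *m y^T) i 0.
Proof. by rewrite /payoff /pure -rowE -row_mul mxE. Qed.

Lemma payoff_pure A i j : payoff A (pure i) (pure j) = A i j.
Proof. by rewrite payoff_pure_l /pure trmx_delta -colE !mxE. Qed.

Lemma payoff_sum_pure_r A x y : payoff A x y = \sum_j y 0 j * payoff A x (pure j).
Proof.
under [RHS]eq_bigr do rewrite payoff_pure_r.
by rewrite /payoff mxE; apply: eq_bigr => j _; rewrite [y^T _ _]mxE mulrC.
Qed.

Lemma payoff_sum_pure_l A x y : payoff A x y = \sum_i x 0 i * payoff A (pure i) y.
Proof.
under [RHS]eq_bigr do rewrite payoff_pure_l.
by rewrite /payoff -mulmxA mxE.
Qed.

Lemma payoff_combr A x y1 y2 a b :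
  payoff A x (a *: y1 + b *: y2) = a * payoff A x y1 + b * payoff A x y2.
Proof. by rewrite /payoff linearD /= !linearZ /= mulmxDr -!scalemxAr !mxE. Qed.

End Payoff.

Section Simplex.
Variables (R : realFieldType) (k : nat).
Implicit Types (w y : 'rV[R]_k) (F : 'I_k -> R).

Lemma simplex_avg_le w F M : simplex w -> (forall j, F j <= M) -> \sum_j w 0 j * F j <= M.
Proof.
move=> [w_ge0 w_sum1] F_le; rewrite -[M]mul1r -w_sum1 mulr_suml.
by apply: ler_sum => j _; apply: ler_wpM2l.
Qed.

Lemma simplex_avg_ge w F M : simplex w -> (forall j, M <= F j) -> M <= \sum_j w 0 j * F j.
Proof.
move=> [w_ge0 w_sum1] F_ge; rewrite -[M]mul1r -w_sum1 mulr_suml.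
by apply: ler_sum => j _; apply: ler_wpM2l.
Qed.

Lemma simplex_pure j : simplex (pure j : 'rV[R]_k).
Proof.
split=> [i|]; first by rewrite mxE ler0n.
rewrite (bigD1 j) //= big1 ?mxE ?eqxx ?addr0 // => l /negbTE l_neq_j.
by rewrite mxE l_neq_j andbF.
Qed.

Lemma simplex_conv y1 y2 a :
  simplex y1 -> simplex y2 -> 0 <= a <= 1 -> simplex ((1 - a) *: y1 + a *: y2).
Proof.
move=> [y1_ge0 y1_sum1] [y2_ge0 y2_sum1] /andP[a_ge0 a_le1]; split.
  by move=> i; rewrite !mxE addr_ge0 ?mulr_ge0 ?subr_ge0.
under eq_bigr do rewrite !mxE.
by rewrite big_split /= -!mulr_sumr y1_sum1 y2_sum1; ring.
Qed.

End Simplex.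

Arguments simplex_pure {R k} j.

Section BestResponse.
Variables (R : realFieldType) (n m : nat) (A : 'M[R]_(n, m.+1)).
Implicit Types (x : 'rV[R]_n) (y : 'rV[R]_m.+1).

Lemma payoff_pure_le_fval x j : payoff A x (pure j) <= fval A x.
Proof. exact: (le_bigmax _ (fun j => payoff A x (pure j))). Qed.

Lemma fval_le x M : (forall j, payoff A x (pure j) <= M) -> fval A x <= M.
Proof. by move=> le_M; apply: bigmax_le. Qed.

Lemma payoff_le_fval x y : simplex y -> payoff A x y <= fval A x.
Proof.
by move=> y_simplex; rewrite payoff_sum_pure_r simplex_avg_le // => j; apply: payoff_pure_le_fval.
Qed.

Lemma fval_best_response x j :
  (forall j', payoff A x (pure j') <= payoff A x (pure j)) -> fval A x = payoff A x (pure j).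
Proof. by move=> j_best; apply/eqP; rewrite eq_le fval_le ?payoff_pure_le_fval. Qed.

End BestResponse.

Lemma payoff_ge0_le1 (R : realFieldType) n m (A : 'M[R]_(n, m)) x y :
  (forall i j, 0 <= A i j <= 1) -> simplex x -> simplex y -> 0 <= payoff A x y <= 1.
Proof.
move=> A01 x_simplex y_simplex.
have pure_payoff01 i : 0 <= payoff A (pure i) y <= 1.
  rewrite payoff_sum_pure_r; under eq_bigr do rewrite payoff_pure.
  by rewrite simplex_avg_ge ?simplex_avg_le // => j; case/andP: (A01 i j).
rewrite payoff_sum_pure_l simplex_avg_ge ?simplex_avg_le // => i.
  by case/andP: (pure_payoff01 i).
by case/andP: (pure_payoff01 i).
Qed.

Lemma row_play_simplex (R : realFieldType) n m (alg : row_alg R n m) ys t :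
  alg_valid alg -> (forall s, (0 < s < t)%N -> simplex (ys s)) ->
  simplex (row_play alg ys t).
Proof.
move=> alg_ok ys_simplex; apply: alg_ok => y /mapP[s]; rewrite mem_iota => s_range ->.
by apply: ys_simplex; lia.
Qed.

Lemma row_play_eq (R : realFieldType) n m (alg : row_alg R n m) ys ys' :
  (forall t, (0 < t)%N -> ys t = ys' t) -> row_play alg ys =1 row_play alg ys'.
Proof.
move=> ys_eq t; rewrite /row_play; congr alg; apply/eq_in_map => s.
by rewrite mem_iota => /andP[s_gt0 _]; apply: ys_eq.
Qed.

(* A minimax row strategy [x*] earns at most [v] against every [y_t], and the
   best fixed pure strategy does no better than [x*] on average. *)
Lemma regret_le_value (R : realFieldType) n m (A : 'M[R]_(n.+1, m.+1)) v alg ys T :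
  is_value A v -> (forall t, simplex (ys t)) -> (0 < T)%N ->
  regret A alg ys T <= v - T%:R^-1 * \sum_(1 <= t < T.+1) payoff A (row_play alg ys t) (ys t).
Proof.
move=> [[xstar xstar_simplex fxstar] _] ys_simplex T_gt0; rewrite /regret lerD2r.
pose avg i := T%:R^-1 * \sum_(1 <= t < T.+1) payoff A (pure i) (ys t).
apply: (@le_trans _ _ (\sum_i xstar 0 i * avg i)).
  by apply: simplex_avg_ge => // i; apply: (bigmin_le _ i avg).
have -> : \sum_i xstar 0 i * avg i = T%:R^-1 * \sum_(1 <= t < T.+1) payoff A xstar (ys t).
  under eq_bigr do rewrite mulrCA mulr_sumr; rewrite -mulr_sumr exchange_big.
  by congr (_ * _); apply: eq_bigr => t _; rewrite payoff_sum_pure_l.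
have T_pos : 0 < T%:R :> R by rewrite ltr0n.
rewrite ler_pdivrMl //.
have -> : T%:R * v = \sum_(1 <= t < T.+1) v by rewrite sumr_const_nat subn1 mulr_natl.
by apply: ler_sum => t _; rewrite -fxstar payoff_le_fval.
Qed.

Section LRCA.
Variables (R : realFieldType) (n m : nat) (A : 'M[R]_(n.+1, m.+1)) (v : R).
Variables (ystar : 'rV[R]_m.+1) (alg : row_alg R n.+1 m.+1) (ys : nat -> 'rV[R]_m.+1).
Hypotheses (A01 : forall i j, 0 <= A i j <= 1) (A_value : is_value A v).
Hypotheses (ystar_minimax : col_minimax A v ystar) (alg_ok : alg_valid alg).
Hypotheses (alg_stable : stable alg ystar) (ys_lrca : lrca A v ystar (row_play alg ys) ys).
Hypothesis ys0 : ys 0 = ystar.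

Local Notation xs := (row_play alg ys).
Local Notation c := (Num.max ((n.+1)%:R / 4) 2 : R).

Lemma lrca_scale_ge2 : 2 <= c.
Proof. by rewrite le_max lexx orbT. Qed.

Lemma lrca_scale_gt0 : 0 < c.
Proof. exact: lt_le_trans (ltr0Sn _ 1) lrca_scale_ge2. Qed.

Lemma value_le_fval_le1 x : simplex x -> v <= fval A x <= 1.
Proof.
move=> x_simplex; rewrite A_value.2 //=; apply: fval_le => j.
by case/andP: (payoff_ge0_le1 A01 x_simplex (simplex_pure j)).
Qed.

Lemma value_ge0 : 0 <= v.
Proof.
have [[x x_simplex <-] _] := A_value; apply: le_trans (payoff_pure_le_fval _ _ ord0).
by case/andP: (payoff_ge0_le1 A01 x_simplex (simplex_pure ord0)).
Qed.

Lemma lrca_simplex t : simplex (ys t).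
Proof.
elim/ltn_ind: t => -[_|s IH]; first by rewrite ys0; case: ystar_minimax.
have [ys_odd ys_even] := @ys_lrca s.+1 isT.
case: (boolP (odd s.+1)) => [/ys_odd -> | /ys_even [j [_ ->]]]; first by case: ystar_minimax.
have /value_le_fval_le1 /andP[v_le_f f_le1] : simplex (xs s).
  by apply: row_play_simplex => // r r_range; apply: IH; lia.
have c_gt0 := lrca_scale_gt0.
apply: simplex_conv; [by case: ystar_minimax | exact: simplex_pure |] => /=.
rewrite divr_ge0 ?subr_ge0 ?(ltW c_gt0) //= ler_pdivrMr // mul1r.
by have := lrca_scale_ge2; have := value_ge0; lra.
Qed.

Lemma xs_simplex t : simplex (xs t).
Proof. by apply: row_play_simplex => // s _; apply: lrca_simplex. Qed.

Lemma lrca_payoff_odd t : odd t -> v <= payoff A (xs t) (ys t).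
Proof.
case: t => // s s_odd; rewrite ((@ys_lrca s.+1 isT).1 s_odd).
by case: ystar_minimax => _ [_]; apply; apply: xs_simplex.
Qed.

(* Stability gives [x_{s+2} = x_{s+1}], so LRCA's best response at round
   [s+2] is a best response to the current play. *)
Lemma lrca_payoff_even s :
  ~~ odd s -> v + (fval A (xs s.+1) - v) ^+ 2 / c <= payoff A (xs s.+2) (ys s.+2).
Proof.
move=> s_even.
have xs_stable : xs s.+2 = xs s.+1.
  apply: alg_stable => //; first exact: lrca_simplex.
  by apply: (@ys_lrca s.+1 isT).1; rewrite /= s_even.
have s2_even : ~~ odd s.+2 by rewrite /= negbK.
have [_ /(_ s2_even)[j [/= j_best ->]]] := @ys_lrca s.+2 isT.
rewrite xs_stable payoff_combr -(fval_best_response j_best).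
have ystar_ge_v : v <= payoff A (xs s.+1) ystar.
  by case: ystar_minimax => _ [_]; apply; apply: xs_simplex.
have /andP[_ f_le1] := value_le_fval_le1 (xs_simplex s.+1).
have alpha_le1 : (fval A (xs s.+1) - v) / c <= 1.
  by rewrite ler_pdivrMr ?lrca_scale_gt0 // mul1r; have := lrca_scale_ge2; have := value_ge0; lra.
move: alpha_le1 ystar_ge_v; set f := fval _ _; set p := payoff _ _ _; set alpha := _ / c.
have -> : (f - v) ^+ 2 / c = alpha * (f - v) by rewrite /alpha; ring.
nra.
Qed.

Lemma lrca_payoff_sum (eps : R) T :
  0 < eps -> (forall l, (0 < l <= T)%N -> eps < fval A (xs l) - v) ->
  T%:R * v + (T./2)%:R * (eps ^+ 2 / c) <= \sum_(1 <= t < T.+1) payoff A (xs t) (ys t).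
Proof.
move=> eps_gt0; elim: T => [|T IH] gap_gt; first by rewrite big_geq // !mul0r addr0.
have {}IH : T%:R * v + (T./2)%:R * (eps ^+ 2 / c) <= \sum_(1 <= t < T.+1) payoff A (xs t) (ys t).
  by apply: IH => l l_range; apply: gap_gt; lia.
set K := eps ^+ 2 / c.
have step : v + (odd T)%:R * K <= payoff A (xs T.+1) (ys T.+1).
  case: (boolP (odd T)) => [T_odd | T_even]; last first.
    by rewrite mul0r addr0 lrca_payoff_odd //= T_even.
  case: T T_odd gap_gt {IH} => // s s_odd gap_gt; rewrite mul1r.
  apply: le_trans (lrca_payoff_even s_odd); rewrite lerD2l.
  apply: ler_wpM2r; first by rewrite invr_ge0 ltW ?lrca_scale_gt0.
  have /ltW eps_le_gap := gap_gt s.+1 (leqnSn _).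
  by rewrite !expr2 ler_pM ?(ltW eps_gt0).
rewrite big_nat_recr //= uphalf_half natrD -[T.+1%:R]natr1.
move: IH step; rewrite -/K; set S := \sum_(_ <= _ < _) _; set b := (odd T)%:R; set h := (T./2)%:R.
lra.
Qed.

Lemma lrca_gap_le (eps : R) : no_regret A alg -> 0 < eps ->
  exists l, (1 <= l)%N /\ fval A (xs l) - v <= eps.
Proof.
move=> alg_no_regret eps_gt0.
set K := eps ^+ 2 / c.
have K_gt0 : 0 < K by rewrite divr_gt0 ?exprn_gt0 ?lrca_scale_gt0.
have [N regret_small] := alg_no_regret ys lrca_simplex (K / 4) (divr_gt0 K_gt0 (ltr0Sn _ 3)).
set T := (N.+1).*2.
have [/hasP[l] | /hasPn gap_gt] := boolP (has (fun l => fval A (xs l) - v <= eps) (iota 1 T)).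
  by rewrite mem_iota => /andP[l_ge1 _] gap_le; exists l.
have T_gt0 : (0 < T)%N by rewrite double_gt0.
have payoff_avg : v + K / 2 <= T%:R^-1 * \sum_(1 <= t < T.+1) payoff A (xs t) (ys t).
  rewrite ler_pdivlMl ?ltr0n //; apply: le_trans (lrca_payoff_sum (T := T) eps_gt0 _).
    by rewrite /T half_double -mul2n natrM -/K le_eqVlt; apply/orP; left; apply/eqP; field.
  by move=> l l_range; rewrite ltNge; apply: gap_gt; rewrite mem_iota; lia.
have /andP[regret_ge _] : - (K / 4) <= regret A alg ys T <= K / 4.
  by rewrite -ler_norml; apply: regret_small; lia.
exfalso; move: payoff_avg regret_ge (regret_le_value alg A_value lrca_simplex T_gt0).
by set avg := T%:R^-1 * _; set r := regret _ _ _ _; lra.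
Qed.

End LRCA.

Theorem theorem18 (R : realFieldType) (n m : nat) (A : 'M[R]_(n.+1, m.+1))
  (v : R) (ystar : 'rV[R]_m.+1) (alg : row_alg R n.+1 m.+1)
  (ys : nat -> 'rV[R]_m.+1) :
  A != 0 ->
  (forall i j, 0 <= A i j <= 1) ->
  is_value A v ->
  col_minimax A v ystar ->
  alg_valid alg ->
  no_regret A alg ->
  stable alg ystar ->
  lrca A v ystar (row_play alg ys) ys ->
  forall eps : R, 0 < eps ->
    exists l : nat, (1 <= l)%N /\ fval A (row_play alg ys l) - v <= eps.
Proof.
move=> _ A01 A_value ystar_minimax alg_ok alg_no_regret alg_stable ys_lrca eps eps_gt0.
(* [ys 0] is not a round and is unconstrained, while [no_regret] and [stable]
   quantify over whole sequences of mixed strategies: reset it to [y*]. *)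
pose ys' t := if t is 0 then ystar else ys t.
have xs_eq : row_play alg ys' =1 row_play alg ys by apply: row_play_eq => -[].
have ys'_lrca : lrca A v ystar (row_play alg ys') ys'.
  by move=> [|t] // t_gt0; rewrite xs_eq; apply: ys_lrca.
have [l [l_ge1 gap_le]] :=
  lrca_gap_le A01 A_value ystar_minimax alg_ok alg_stable ys'_lrca (erefl _) alg_no_regret eps_gt0.
by exists l; rewrite -xs_eq.
Qed.
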